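(* Let $I$ be an ideal on $\mathbb{N}$ with $\mathrm{Fin}\subseteq I$ and $I\neq\mathrm{Fin}$, and suppose there is an infinite set $C\subseteq\mathbb{N}$ such that every $D\subseteq C$ with $D\in I$ is finite and $\mathbb{N}\setminus C\in I$ (e.g. $C$ witnessing that $I$ has the supset property). Then there exists $(x_n)\in\ell_1^{*}$ such that $A(x_n)$ is a closed interval and $A_I(x_n)$ is meager and Lebesgue null.
   Context: $\ell_1^{*}=\{(x_n)\in\ell_1 : x_n\neq 0\text{ for every }n\}$. An ideal on $\mathbb{N}$ is a family $I\subseteq P(\mathbb{N})$ closed under finite unions and subsets with $\mathbb{N}\notin I$; $\mathrm{Fin}$ is the ideal of finite sets. An ideal is dense if every infinite set has an infinite subset in $I$. For a non-dense ideal $I$ and an infinite $A$ all of whose subsets belonging to $I$ are finite, $I$ has the supset property if there exists $C\supseteq A$ such that every $D\subseteq C$ with $D\in I$ is finite and $\mathbb{N}\setminus C\in I$. $A(x_n)=\{\sum_{n\in A}x_n : A\subseteq\mathbb{N}\}$, $A_I(x_n)=\{\sum_{n\in A}x_n : A\in I\}$. *)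

From Stdlib Require Import Reals Rtopology.
Open Scope R_scope.

Definition nset := nat -> bool.

Definition nsubset (A B : nset) : Prop := forall n, A n = true -> B n = true.
Definition nunion (A B : nset) : nset := fun n => orb (A n) (B n).
Definition ncompl (A : nset) : nset := fun n => negb (A n).
Definition nfull : nset := fun _ => true.
Definition nfinite (A : nset) : Prop := exists N, forall n, A n = true -> (n < N)%nat.

Definition is_ideal (I : nset -> Prop) : Prop :=
  (forall A B, I A -> I B -> I (nunion A B)) /\
  (forall A B, nsubset B A -> I A -> I B) /\
  ~ I nfull.

Definition in_l1 (x : nat -> R) : Prop :=
  exists l, infinite_sum (fun n => Rabs (x n)) l.
Definition in_l1_star (x : nat -> R) : Prop :=
  in_l1 x /\ forall n, x n <> 0.

Definition subsum_is (x : nat -> R) (A : nset) (s : R) : Prop :=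
  infinite_sum (fun n => if A n then x n else 0) s.

Definition achievement_set (x : nat -> R) : R -> Prop :=
  fun s => exists A : nset, subsum_is x A s.
Definition ideal_achievement_set (I : nset -> Prop) (x : nat -> R) : R -> Prop :=
  fun s => exists A : nset, I A /\ subsum_is x A s.

Definition is_closed_interval (S : R -> Prop) : Prop :=
  exists a b, a <= b /\ forall s, S s <-> a <= s <= b.

Definition nowhere_dense (S : R -> Prop) : Prop :=
  forall y, ~ interior (adherence S) y.
Definition meager (S : R -> Prop) : Prop :=
  exists F : nat -> (R -> Prop),
    (forall k, nowhere_dense (F k)) /\
    (forall s, S s -> exists k, F k s).

Definition lebesgue_null (S : R -> Prop) : Prop :=
  forall eps, 0 < eps ->
    exists a b : nat -> R,
      (forall k, a k <= b k) /\
      (forall s, S s -> exists k, a k < s < b k) /\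
      (forall N, sum_f_R0 (fun k => b k - a k) N <= eps).

(* Take x_n = 2^-(n+1).  Greedy binary expansion shows A(x_n) = [0, 1].  If
   A ∈ I then A ∩ C ∈ I, hence A ∩ C is finite, so A avoids C beyond some M and
   its sum lies in the set T_M of sums over such sets.  For c ∈ C with c >= M,
   every point of T_M lies in the lower half of a dyadic interval of length
   2^-c; as C is infinite, T_M is nowhere dense.  The same observation bounds
   the possible partial sums at level L: each element of C beyond M halves
   their number relative to 2^L, so T_M has finite covers of arbitrarily small
   total length and the union over M is Lebesgue null. *)

From Stdlib Require Import Reals Rtopology ClassicalEpsilon FunctionalExtensionality List Lia Lra ZArith Bool.
Import ListNotations.
Open Scope R_scope.

Definition dyadic (n : nat) : R := (/2) ^ S n.

Fixpoint partial_subsum (A : nset) (n : nat) : R :=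
  match n with
  | O => 0
  | S n => partial_subsum A n + (if A n then dyadic n else 0)
  end.

Lemma pow_half_pos n : 0 < (/2) ^ n.
Proof. apply pow_lt; lra. Qed.

Lemma pow_half_le_1 n : (/2) ^ n <= 1.
Proof. induction n as [|n IH]; simpl; [lra|]. pose proof (pow_half_pos n). lra. Qed.

Lemma pow_half_antimono m n : (m <= n)%nat -> (/2) ^ n <= (/2) ^ m.
Proof.
  intros Hmn. replace n with (m + (n - m))%nat by lia. rewrite pow_add.
  pose proof (pow_half_pos m). pose proof (pow_half_le_1 (n - m)).
  pose proof (pow_half_pos (n - m)). nra.
Qed.

Lemma pow_half_small y : 0 < y -> exists N, (/2) ^ N < y.
Proof.
  intros Hy. destruct (pow_lt_1_zero (/2) ltac:(rewrite Rabs_pos_eq; lra) y Hy) as [N HN].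
  exists N. specialize (HN N (le_n N)). rewrite Rabs_pos_eq in HN; [lra|].
  left; apply pow_half_pos.
Qed.

Lemma sum_dyadic N : sum_f_R0 dyadic N = 1 - (/2) ^ S N.
Proof.
  induction N as [|N IH]; simpl sum_f_R0; [|rewrite IH]; unfold dyadic; simpl; field.
Qed.

Lemma sum_f_R0_partial_subsum (A : nset) n :
  sum_f_R0 (fun k : nat => if A k then dyadic k else 0) n = partial_subsum A (S n).
Proof. induction n as [|n IH]; simpl in *; [lra|]. rewrite IH. reflexivity. Qed.

Lemma partial_subsum_tail (A : nset) n k :
  0 <= partial_subsum A (n + k) - partial_subsum A n <= (/2) ^ n - (/2) ^ (n + k).
Proof.
  induction k as [|k IH].
  - rewrite Nat.add_0_r. lra.
  - rewrite Nat.add_succ_r. simpl partial_subsum. unfold dyadic.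
    pose proof (pow_half_pos (S (n + k))). simpl in *. destruct (A _); lra.
Qed.

Lemma partial_subsum_mono (A : nset) m n : (m <= n)%nat -> partial_subsum A m <= partial_subsum A n.
Proof.
  intros Hmn. replace n with (m + (n - m))%nat by lia.
  pose proof (partial_subsum_tail A m (n - m)). lra.
Qed.

Lemma partial_subsum_le_tail (A : nset) m n : partial_subsum A m <= partial_subsum A n + (/2) ^ n.
Proof.
  destruct (Nat.le_gt_cases m n) as [Hmn|Hnm].
  - pose proof (partial_subsum_mono A m n Hmn). pose proof (pow_half_pos n). lra.
  - replace m with (n + (m - n))%nat by lia.
    pose proof (partial_subsum_tail A n (m - n)). pose proof (pow_half_pos (n + (m - n))). lra.
Qed.

Lemma subsum_is_dyadicE (A : nset) s :
  subsum_is dyadic A s <-> forall n, 0 <= s - partial_subsum A n <= (/2) ^ n.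
Proof.
  unfold subsum_is. split.
  - intros Hs n.
    assert (Hcv : Un_cv (fun m => partial_subsum A (S m)) s).
    { intros eps Heps. destruct (Hs eps Heps) as [N HN]. exists N. intros m Hm.
      rewrite <- sum_f_R0_partial_subsum. exact (HN m Hm). }
    assert (Hlo : partial_subsum A (S n) <= s).
    { refine (growing_ineq _ _ _ Hcv n). intros m. apply partial_subsum_mono. lia. }
    assert (Hhi : s <= partial_subsum A n + (/2) ^ n).
    { refine (Rle_cv_lim _ Hcv _); [intros m; apply partial_subsum_le_tail|].
      intros eps Heps. exists O. intros m _. unfold Rdist. rewrite Rminus_diag, Rabs_R0. lra. }
    pose proof (partial_subsum_mono A n (S n) (Nat.le_succ_diag_r n)). lra.
  - intros Hs eps Heps. destruct (pow_half_small eps Heps) as [N HN].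
    exists N. intros n Hn. rewrite sum_f_R0_partial_subsum. unfold Rdist.
    specialize (Hs (S n)). pose proof (pow_half_antimono N (S n) ltac:(lia)).
    rewrite Rabs_minus_sym, Rabs_pos_eq; lra.
Qed.

Fixpoint greedy_sum (t : R) (n : nat) : R :=
  match n with
  | O => 0
  | S n => if Rle_dec (greedy_sum t n + dyadic n) t then greedy_sum t n + dyadic n
           else greedy_sum t n
  end.

Definition greedy_set (t : R) : nset :=
  fun n => if Rle_dec (greedy_sum t n + dyadic n) t then true else false.

Lemma partial_subsum_greedy_set t n : partial_subsum (greedy_set t) n = greedy_sum t n.
Proof.
  induction n as [|n IH]; simpl; [reflexivity|]. rewrite IH. unfold greedy_set.
  destruct (Rle_dec _ t); lra.
Qed.

Lemma greedy_sum_approx t n : 0 <= t <= 1 -> 0 <= t - greedy_sum t n <= (/2) ^ n.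
Proof.
  intros Ht. induction n as [|n IH]; simpl; [lra|].
  unfold dyadic. destruct (Rle_dec _ t); simpl in *; lra.
Qed.

Lemma achievement_set_dyadicE s : achievement_set dyadic s <-> 0 <= s <= 1.
Proof.
  split.
  - intros [A HA]. apply subsum_is_dyadicE with (n := O) in HA. simpl in HA. lra.
  - intros Hs. exists (greedy_set s). apply subsum_is_dyadicE. intros n.
    rewrite partial_subsum_greedy_set. now apply greedy_sum_approx.
Qed.

Lemma partial_subsum_full n : partial_subsum nfull n = 1 - (/2) ^ n.
Proof. induction n as [|n IH]; simpl; [lra|]. rewrite IH. unfold dyadic, nfull. simpl. field. Qed.

Lemma dyadic_in_l1_star : in_l1_star dyadic.
Proof.
  split.
  - exists 1.
    replace (fun n => Rabs (dyadic n)) with (fun n => if nfull n then dyadic n else 0).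
    + apply subsum_is_dyadicE. intros n. rewrite partial_subsum_full.
      pose proof (pow_half_pos n). lra.
    + apply functional_extensionality. intros n. symmetry. apply Rabs_pos_eq.
      left; apply pow_half_pos.
  - intros n. pose proof (pow_half_pos (S n)). unfold dyadic. lra.
Qed.

Lemma partial_subsum_on_grid (A : nset) n : exists j : Z, partial_subsum A n = IZR j * (/2) ^ n.
Proof.
  induction n as [|n [j Hj]]; [exists 0%Z; simpl; lra|]. simpl partial_subsum.
  exists (2 * j + (if A n then 1 else 0))%Z.
  rewrite plus_IZR, mult_IZR, Hj. unfold dyadic. destruct (A n); simpl; field.
Qed.

Lemma nowhere_dense_of_grid_gaps (X : R -> Prop) :
  (forall delta, 0 < delta -> exists w, 0 < w < delta /\
     forall s, X s -> exists j : Z, IZR j * w <= s <= IZR j * w + w / 2) ->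
  nowhere_dense X.
Proof.
  intros Hgaps y [delta Hdisc].
  destruct (Hgaps delta (cond_pos delta)) as [w [[Hw Hwd] Hgrid]].
  set (j0 := Int_part (y / w)).
  assert (Hj0 : IZR j0 * w <= y < IZR j0 * w + w).
  { pose proof (base_Int_part (y / w)) as [H1 H2]. fold j0 in H1, H2.
    replace y with (y / w * w) by (field; lra). split; nra. }
  (* The point three quarters of the way through the grid cell of [y] lies in an
     open gap of width [w / 4] that [X] does not meet. *)
  set (z := IZR j0 * w + 3 / 4 * w).
  assert (Hz : disc y delta z).
  { unfold disc. apply Rabs_def1; unfold z; lra. }
  assert (Hw8 : 0 < w / 8) by lra.
  destruct (Hdisc z Hz (disc z (mkposreal _ Hw8))) as [s [Hsz HXs]].
  { exists (mkposreal _ Hw8). intros u Hu. exact Hu. }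
  unfold disc in Hsz. simpl in Hsz. apply Rabs_def2 in Hsz. unfold z in Hsz.
  destruct (Hgrid s HXs) as [j Hj].
  assert (Hlt : (j0 < j)%Z) by (apply lt_IZR; nra).
  assert (Hgt : (j < j0 + 1)%Z) by (apply lt_IZR; rewrite plus_IZR; nra).
  lia.
Qed.

Definition avoids_beyond (C : nset) (M : nat) (A : nset) : Prop :=
  forall n, (M <= n)%nat -> C n = true -> A n = false.

Definition avoiding_sums (C : nset) (M : nat) (s : R) : Prop :=
  exists A, avoids_beyond C M A /\ subsum_is dyadic A s.

Fixpoint reachable_sums (C : nset) (M L : nat) : list R :=
  match L with
  | O => [0]
  | S L => if (C L && (M <=? L)%nat)%bool then reachable_sums C M L
           else flat_map (fun p => [p; p + dyadic L]) (reachable_sums C M L)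
  end.

Definition reachable_mass (C : nset) (M L : nat) : R :=
  INR (length (reachable_sums C M L)) * (/2) ^ L.

Definition interval_length (e : R * R) : R := snd e - fst e.

Fixpoint total_length (l : list (R * R)) : R :=
  match l with
  | [] => 0
  | e :: l => interval_length e + total_length l
  end.

Section AvoidingSums.

Variables (C : nset) (M : nat).
Hypothesis C_unbounded : forall L, exists c, (L <= c)%nat /\ C c = true.

Lemma avoiding_sums_on_half_grid c s :
  (M <= c)%nat -> C c = true -> avoiding_sums C M s ->
  exists j : Z, IZR j * (/2) ^ c <= s <= IZR j * (/2) ^ c + (/2) ^ c / 2.
Proof.
  intros Hc HCc [A [HA Hs]]. destruct (partial_subsum_on_grid A c) as [j Hj].
  exists j. rewrite <- Hj.
  assert (Hskip : partial_subsum A (S c) = partial_subsum A c).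
  { simpl. rewrite (HA c Hc HCc). ring. }
  apply subsum_is_dyadicE with (n := S c) in Hs. rewrite Hskip in Hs. simpl in Hs. lra.
Qed.

Lemma avoiding_sums_nowhere_dense : nowhere_dense (avoiding_sums C M).
Proof.
  apply nowhere_dense_of_grid_gaps. intros delta Hdelta.
  destruct (pow_half_small delta Hdelta) as [L HL].
  destruct (C_unbounded (max L M)) as [c [Hc HCc]].
  exists ((/2) ^ c). split.
  - split; [apply pow_half_pos|]. pose proof (pow_half_antimono L c ltac:(lia)). lra.
  - intros s Hs. apply (avoiding_sums_on_half_grid c); auto. lia.
Qed.

Lemma partial_subsum_reachable (A : nset) L :
  avoids_beyond C M A -> In (partial_subsum A L) (reachable_sums C M L).
Proof.
  intros HA. induction L as [|L IH]; simpl; [auto|].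
  destruct (C L && (M <=? L)%nat)%bool eqn:E.
  - apply andb_true_iff in E as [HCL HML]. apply Nat.leb_le in HML.
    rewrite (HA L HML HCL), Rplus_0_r. exact IH.
  - apply in_flat_map. exists (partial_subsum A L). split; [exact IH|].
    destruct (A L); simpl; [right|]; left; ring.
Qed.

Lemma reachable_mass_step L :
  reachable_mass C M (S L) =
  if (C L && (M <=? L)%nat)%bool then reachable_mass C M L / 2 else reachable_mass C M L.
Proof.
  unfold reachable_mass. simpl reachable_sums. destruct (_ && _)%bool; simpl pow.
  - field.
  - assert (Hlen : forall l : list R,
              length (flat_map (fun p => [p; p + dyadic L]) l) = (2 * length l)%nat).
    { induction l as [|p l IHl]; simpl; [reflexivity|]. rewrite IHl. lia. }
    rewrite Hlen, mult_INR. simpl. field.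
Qed.

Lemma reachable_mass_antimono L k : reachable_mass C M (L + k) <= reachable_mass C M L.
Proof.
  induction k as [|k IH]; [rewrite Nat.add_0_r; lra|].
  rewrite Nat.add_succ_r, reachable_mass_step.
  assert (0 <= reachable_mass C M (L + k)).
  { unfold reachable_mass. pose proof (pos_INR (length (reachable_sums C M (L + k)))).
    pose proof (pow_half_pos (L + k)). nra. }
  destruct (_ && _)%bool; lra.
Qed.

(* Each element of [C] beyond [M] halves the mass, and [C] is unbounded. *)
Lemma reachable_mass_small r : exists L, reachable_mass C M L <= (/2) ^ r.
Proof.
  induction r as [|r [L HL]].
  - exists O. unfold reachable_mass. simpl. lra.
  - destruct (C_unbounded (max L M)) as [c [Hc HCc]].
    exists (S c). rewrite reachable_mass_step, HCc.
    replace (M <=? c)%nat with true by (symmetry; apply Nat.leb_le; lia). simpl.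
    pose proof (reachable_mass_antimono L (c - L)) as Hanti.
    replace (L + (c - L))%nat with c in Hanti by lia. lra.
Qed.

Lemma avoiding_sums_finite_cover eps : 0 < eps ->
  exists l : list (R * R),
    (forall e, In e l -> fst e <= snd e) /\
    (forall s, avoiding_sums C M s -> exists e, In e l /\ fst e < s < snd e) /\
    total_length l <= eps.
Proof.
  intros Heps. destruct (pow_half_small (eps / 3)) as [r Hr]; [lra|].
  destruct (reachable_mass_small r) as [L HL].
  set (w := (/2) ^ L). assert (Hw : 0 < w) by apply pow_half_pos.
  exists (map (fun p => (p - w, p + 2 * w)) (reachable_sums C M L)). split; [|split].
  - intros e He. apply in_map_iff in He as [p [<- _]]. simpl. lra.
  - intros s Hs. destruct Hs as [A [HA Hs]].
    exists (partial_subsum A L - w, partial_subsum A L + 2 * w). split.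
    + apply in_map_iff. exists (partial_subsum A L).
      split; [reflexivity|now apply partial_subsum_reachable].
    + apply subsum_is_dyadicE with (n := L) in Hs. fold w in Hs. simpl. lra.
  - assert (Hmap : forall l : list R,
              total_length (map (fun p => (p - w, p + 2 * w)) l) = INR (length l) * (3 * w)).
    { induction l as [|p l IHl]; simpl map; simpl length; [simpl; lra|].
      simpl total_length. rewrite IHl, S_INR. unfold interval_length. simpl. ring. }
    rewrite Hmap. unfold reachable_mass in HL. fold w in HL. lra.
Qed.

End AvoidingSums.

Lemma sum_nth_interval_length_le (l : list (R * R)) :
  (forall e, In e l -> fst e <= snd e) ->
  forall N, sum_f_R0 (fun k => interval_length (nth k l (0, 0))) N <= total_length l.
Proof.
  induction l as [|e l IH]; intros Hl N.
  - induction N as [|N IHN]; simpl in *; unfold interval_length in *; simpl in *; lra.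
  - assert (He : fst e <= snd e) by (apply Hl; left; reflexivity).
    assert (Hl' : forall e', In e' l -> fst e' <= snd e') by (intros; apply Hl; right; assumption).
    assert (Htot : 0 <= total_length l).
    { clear -Hl'. induction l as [|e l IHl]; simpl; [lra|]. unfold interval_length.
      assert (fst e <= snd e) by (apply Hl'; left; reflexivity).
      assert (0 <= total_length l) by (apply IHl; intros; apply Hl'; right; assumption). lra. }
    destruct N as [|N]; [simpl; unfold interval_length; lra|].
    rewrite decomp_sum by lia. specialize (IH Hl' N). simpl in *. unfold interval_length in *. lra.
Qed.

Lemma total_length_app (l1 l2 : list (R * R)) :
  total_length (l1 ++ l2) = total_length l1 + total_length l2.
Proof. induction l1 as [|e l1 IH]; simpl; [|rewrite IH]; lra. Qed.

Section PaddedConcat.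

Variable covers : nat -> list (R * R).

(* Each block is padded with the empty interval [(0, 0)], so that the [N]-th
   prefix has more than [N] entries and the [k]-th interval of the infinite
   concatenation is already determined by the [k]-th prefix. *)
Fixpoint padded_concat (N : nat) : list (R * R) :=
  match N with
  | O => (0, 0) :: covers O
  | S N => padded_concat N ++ (0, 0) :: covers (S N)
  end.

Lemma padded_concat_length N : (N < length (padded_concat N))%nat.
Proof. induction N as [|N IH]; simpl; [lia|]. rewrite length_app. simpl. lia. Qed.

Lemma padded_concat_prefix N m : exists rest, padded_concat (N + m) = padded_concat N ++ rest.
Proof.
  induction m as [|m [rest Hrest]]; [exists []; rewrite Nat.add_0_r, app_nil_r; reflexivity|].
  exists (rest ++ (0, 0) :: covers (S (N + m))). rewrite Nat.add_succ_r. simpl.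
  rewrite Hrest, app_assoc. reflexivity.
Qed.

Lemma padded_concat_nth N k :
  (k < length (padded_concat N))%nat ->
  nth k (padded_concat N) (0, 0) = nth k (padded_concat k) (0, 0).
Proof.
  intros Hk. destruct (Nat.le_gt_cases N k) as [HNk|HkN].
  - destruct (padded_concat_prefix N (k - N)) as [rest Hrest].
    replace (N + (k - N))%nat with k in Hrest by lia. rewrite Hrest, app_nth1; auto.
  - destruct (padded_concat_prefix k (N - k)) as [rest Hrest].
    replace (k + (N - k))%nat with N in Hrest by lia. rewrite Hrest, app_nth1; auto.
    apply padded_concat_length.
Qed.

Lemma in_padded_concat M e : In e (covers M) -> In e (padded_concat M).
Proof. destruct M; simpl; auto. intros He. apply in_or_app. simpl. auto. Qed.

Lemma padded_concat_in N e :
  In e (padded_concat N) -> e = (0, 0) \/ exists M, In e (covers M).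
Proof.
  induction N as [|N IH]; simpl.
  - intros [He|He]; eauto.
  - intros He. apply in_app_or in He as [He|[He|He]]; eauto.
Qed.

Lemma total_length_padded_concat N :
  total_length (padded_concat N) = sum_f_R0 (fun M => total_length (covers M)) N.
Proof.
  induction N as [|N IH]; simpl; unfold interval_length; simpl; [lra|].
  rewrite total_length_app, IH. simpl. unfold interval_length. simpl. ring.
Qed.

End PaddedConcat.

Lemma lebesgue_null_of_finite_covers (family : nat -> R -> Prop) :
  (forall M eps, 0 < eps -> exists l : list (R * R),
     (forall e, In e l -> fst e <= snd e) /\
     (forall s, family M s -> exists e, In e l /\ fst e < s < snd e) /\
     total_length l <= eps) ->
  lebesgue_null (fun s => exists M, family M s).
Proof.
  intros Hcovers eps Heps.
  destruct (choice (fun M l =>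
              (forall e, In e l -> fst e <= snd e) /\
              (forall s, family M s -> exists e, In e l /\ fst e < s < snd e) /\
              total_length l <= dyadic M * eps)) as [covers Hc].
  { intros M. apply Hcovers. pose proof (pow_half_pos (S M)). unfold dyadic. nra. }
  set (interval k := nth k (padded_concat covers k) (0, 0)).
  assert (Hord : forall e N, In e (padded_concat covers N) -> fst e <= snd e).
  { intros e N He. apply padded_concat_in in He as [->|[M HM]]; [simpl; lra|].
    now apply (Hc M). }
  exists (fun k => fst (interval k)), (fun k => snd (interval k)). split; [|split].
  - intros k. destruct (nth_in_or_default k (padded_concat covers k) (0, 0)) as [H|H].
    + exact (Hord _ _ H).
    + unfold interval. rewrite H. simpl. lra.
  - intros s [M HsM]. destruct (proj1 (proj2 (Hc M)) s HsM) as [e [He Hse]].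
    apply (in_padded_concat covers) in He.
    destruct (In_nth _ _ (0, 0) He) as [k [Hk Hnth]].
    exists k. unfold interval. rewrite <- (padded_concat_nth covers M k Hk), Hnth. exact Hse.
  - intros N.
    rewrite (sum_eq _ (fun k => interval_length (nth k (padded_concat covers N) (0, 0)))).
    2:{ intros k Hk. unfold interval, interval_length.
        rewrite (padded_concat_nth covers N k); [reflexivity|].
        pose proof (padded_concat_length covers N). lia. }
    eapply Rle_trans; [apply sum_nth_interval_length_le; intros e He; exact (Hord e N He)|].
    rewrite total_length_padded_concat.
    apply Rle_trans with (sum_f_R0 (fun M => dyadic M * eps) N).
    + apply sum_Rle. intros M _. apply Hc.
    + rewrite <- scal_sum, sum_dyadic. pose proof (pow_half_pos (S N)). nra.
Qed.

Lemma not_nfinite_unbounded (C : nset) :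
  ~ nfinite C -> forall L, exists c, (L <= c)%nat /\ C c = true.
Proof.
  intros HC L. apply NNPP. intros Hnone. apply HC. exists L. intros n Hn.
  destruct (Nat.lt_ge_cases n L) as [HnL|HLn]; [exact HnL|].
  exfalso. apply Hnone. eauto.
Qed.

Lemma ideal_achievement_set_avoiding (I : nset -> Prop) (C : nset) s :
  (forall A B, nsubset B A -> I A -> I B) ->
  (forall D, nsubset D C -> I D -> nfinite D) ->
  ideal_achievement_set I dyadic s -> exists M, avoiding_sums C M s.
Proof.
  intros Isub Csmall [A [IA Hs]].
  set (D := fun n => (A n && C n)%bool).
  assert (HD : nfinite D).
  { apply Csmall; [|apply (Isub A); [|exact IA]];
      intros n Hn; unfold D in Hn; apply andb_true_iff in Hn; tauto. }
  destruct HD as [M HM]. exists M, A. split; [|exact Hs].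
  intros n Hn HCn. destruct (A n) eqn:HAn; [|reflexivity].
  assert (HDn : D n = true) by (unfold D; rewrite HAn, HCn; reflexivity).
  specialize (HM n HDn). lia.
Qed.

Theorem mainTheorem15 (I : nset -> Prop) :
  is_ideal I ->
  (forall A, nfinite A -> I A) ->
  (exists A, I A /\ ~ nfinite A) ->
  (exists C : nset,
      ~ nfinite C /\
      (forall D, nsubset D C -> I D -> nfinite D) /\
      I (ncompl C)) ->
  exists x : nat -> R,
    in_l1_star x /\
    is_closed_interval (achievement_set x) /\
    meager (ideal_achievement_set I x) /\
    lebesgue_null (ideal_achievement_set I x).
Proof.
  intros [_ [Isub _]] _ _ [C [Cinfinite [Csmall _]]].
  pose proof (not_nfinite_unbounded C Cinfinite) as Cunbounded.
  pose proof (ideal_achievement_set_avoiding I C) as Havoid.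
  exists dyadic. split; [exact dyadic_in_l1_star|]. split; [|split].
  - exists 0, 1. split; [lra|]. apply achievement_set_dyadicE.
  - exists (avoiding_sums C). split.
    + intros M. now apply avoiding_sums_nowhere_dense.
    + intros s Hs. now apply Havoid.
  - intros eps Heps.
    destruct (lebesgue_null_of_finite_covers (avoiding_sums C)
                (fun M => avoiding_sums_finite_cover C M Cunbounded) eps Heps)
      as [a [b [Hab [Hcover Hsum]]]].
    exists a, b. repeat split; [exact Hab| |exact Hsum].
    intros s Hs. apply Hcover. now apply Havoid.
Qed.
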